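(* For real $\alpha,\beta$, the inequalities $M_{\alpha }\left( 1,\cosh x;\tfrac{2}{3}\right) <\frac{\sinh x}{x}<M_{\beta }\left( 1,\cosh x;\tfrac{2}{3}\right)$ hold for all $x\in(0,\infty)$ if and only if $\alpha \leq 0$ and $\beta \geq 4/5$.
   Context: For $a,b>0$ and $w\in(0,1)$, the weighted power mean is $M_{r}(a,b;w)=\left( wa^{r}+(1-w) b^{r}\right)^{1/r}$ if $r\neq 0$ and $M_{0}(a,b;w)=a^{w}b^{1-w}$. *)

From Stdlib Require Import Reals.
Open Scope R_scope.

Definition wpmean (r a b w : R) : R :=
  if Req_EM_T r 0 then Rpower a w * Rpower b (1 - w)
  else Rpower (w * Rpower a r + (1 - w) * Rpower b r) (1 / r).

(* Put L_r(x) = ln M_r(1, cosh x; 2/3) - ln (sinh x / x).  Both terms lie in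
   [0, ln cosh x], hence |L_r(x)| <= x, and using cosh^2 - sinh^2 = 1 the derivative
   L_r' has the sign of
     N(v, x) = v (cosh x sinh x - x) - 2 cosh x (x cosh x - sinh x),   v = cosh^r x,
   which is increasing in v.  For r <= 0 we have v <= 1 and N(1, x) < 0, so L_r < 0.
   For r >= 4/5 we have v >= cosh^(4/5) x and N(cosh^(4/5) x, x) > 0; this is reduced,
   by differentiating twice, to cosh x (5 cosh x + 6 x sinh x)^5 < (9 cosh^2 x - 4)^5,
   a polynomial inequality once cosh and x sinh are bounded.  Conversely, for
   0 < r < 4/5 Bernoulli's inequality v <= 1 + r (cosh x - 1) and Taylor bounds give
   N < 0 on (0, 4/5 - r], while for r > 0 the mean beats sinh x / x at x = 3^(1/r). *)

From Stdlib Require Import Reals Lra Psatz.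
From Coquelicot Require Import Coquelicot.
Open Scope R_scope.

Lemma cosh_sqr x : cosh x * cosh x = sinh x * sinh x + 1.
Proof.
  unfold cosh, sinh; rewrite exp_Ropp.
  assert (H := exp_pos x); field; lra.
Qed.

Lemma cosh_pos x : 0 < cosh x.
Proof. unfold cosh; assert (H1 := exp_pos x); assert (H2 := exp_pos (- x)); lra. Qed.

Lemma cosh_ge1 x : 1 <= cosh x.
Proof. assert (H := cosh_sqr x); assert (H1 := cosh_pos x); nra. Qed.

Lemma sinh_pos x : 0 < x -> 0 < sinh x.
Proof. intros Hx; rewrite <- sinh_0; now apply sinh_lt. Qed.

Lemma sinh_ge0 x : 0 <= x -> 0 <= sinh x.
Proof. intros [Hx | <-]; [now left; apply sinh_pos | rewrite sinh_0; lra]. Qed.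

Lemma cosh_gt1 x : 0 < x -> 1 < cosh x.
Proof.
  intros Hx; assert (H := cosh_sqr x); assert (H1 := cosh_pos x).
  assert (H2 := sinh_pos x Hx); nra.
Qed.

Lemma sinh_lt_cosh x : sinh x < cosh x.
Proof. unfold sinh, cosh; assert (H := exp_pos (- x)); lra. Qed.

Lemma cosh_le_exp x : 0 <= x -> cosh x <= exp x.
Proof.
  intros [Hx | <-]; unfold cosh.
  - assert (exp (- x) < exp x) by (apply exp_increasing; lra); lra.
  - rewrite Ropp_0; lra.
Qed.

Lemma ln_cosh_le x : 0 <= x -> ln (cosh x) <= x.
Proof.
  intros Hx; rewrite <- (ln_exp x) at 2.
  apply ln_le; [apply cosh_pos | now apply cosh_le_exp].
Qed.

Lemma cosh_double x : cosh x = 1 + 2 * sinh (x / 2) * sinh (x / 2).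
Proof.
  unfold cosh, sinh; replace x with (x / 2 + x / 2) at 1 2 by field.
  rewrite Ropp_plus_distr, !exp_plus, !exp_Ropp.
  assert (H := exp_pos (x / 2)); field; lra.
Qed.

Lemma sinh_double x : sinh x = 2 * sinh (x / 2) * cosh (x / 2).
Proof.
  unfold cosh, sinh; replace x with (x / 2 + x / 2) at 1 2 by field.
  rewrite Ropp_plus_distr, !exp_plus, !exp_Ropp.
  assert (H := exp_pos (x / 2)); field; lra.
Qed.

Lemma derive_pos_lt (f g : R -> R) a b : a < b ->
  (forall x, a <= x <= b -> is_derive f x (g x)) ->
  (forall x, a < x < b -> 0 < g x) -> f a < f b.
Proof.
  intros Hab Hd Hg.
  destruct (MVT_cor2 f g a b Hab) as [c [Hc Hac]].
  - intros; apply is_derive_Reals; auto.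
  - specialize (Hg c Hac); nra.
Qed.

Lemma derive_nonneg_le (f g : R -> R) a b : a <= b ->
  (forall x, a <= x <= b -> is_derive f x (g x)) ->
  (forall x, a < x < b -> 0 <= g x) -> f a <= f b.
Proof.
  intros [Hab | <-] Hd Hg; [| lra].
  destruct (MVT_cor2 f g a b Hab) as [c [Hc Hac]].
  - intros; apply is_derive_Reals; auto.
  - specialize (Hg c Hac); nra.
Qed.

Lemma pos_of_derive_pos (f g : R -> R) : f 0 = 0 ->
  (forall x, 0 <= x -> is_derive f x (g x)) ->
  (forall x, 0 < x -> 0 < g x) -> forall x, 0 < x -> 0 < f x.
Proof.
  intros H0 Hd Hg x Hx; rewrite <- H0.
  apply (derive_pos_lt f g); auto; intros y Hy; [apply Hd | apply Hg]; lra.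
Qed.

Lemma nonneg_of_derive_nonneg (f g : R -> R) b : f 0 = 0 ->
  (forall x, 0 <= x <= b -> is_derive f x (g x)) ->
  (forall x, 0 < x < b -> 0 <= g x) -> forall x, 0 <= x <= b -> 0 <= f x.
Proof.
  intros H0 Hd Hg x Hx; rewrite <- H0.
  apply (derive_nonneg_le f g); try lra; intros y Hy; [apply Hd | apply Hg]; lra.
Qed.

(* The hypothesis [F y <= y] stands in for [F (0+) = 0]: the functions it is applied
   to involve [ln (sinh x / x)], which has no value at [0]. *)
Lemma neg_of_derive_neg_near0 (F G : R -> R) b : 0 < b ->
  (forall x, 0 < x <= b -> is_derive F x (G x)) ->
  (forall x, 0 < x < b -> G x < 0) ->
  (forall y, 0 < y -> F y <= y) -> F b < 0.
Proof.
  intros Hb Hd HG Hup.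
  assert (Hdecr : forall u v, 0 < u < v -> v <= b -> F v < F u).
  { intros u v Huv Hvb.
    enough (- F u < - F v) by lra.
    apply (derive_pos_lt (fun x => - F x) (fun x => - G x)); try lra.
    - intros y Hy; apply (is_derive_opp F); apply Hd; lra.
    - intros y Hy; enough (G y < 0) by lra; apply HG; lra. }
  set (c := F (b / 2)).
  assert (Hbc : F b < c) by (apply Hdecr; lra).
  destruct (Rle_dec c 0) as [Hc | Hc]; [lra | exfalso].
  set (y := Rmin (b / 4) (c / 2)).
  assert (Hy : 0 < y) by (apply Rmin_pos; lra).
  assert (Hyb : y <= b / 4) by apply Rmin_l.
  assert (Hyc : y <= c / 2) by apply Rmin_r.
  assert (c < F y) by (apply Hdecr; lra).
  assert (F y <= y) by (apply Hup; lra).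
  lra.
Qed.

Lemma pos_of_derive_pos_near0 (F G : R -> R) b : 0 < b ->
  (forall x, 0 < x <= b -> is_derive F x (G x)) ->
  (forall x, 0 < x < b -> 0 < G x) ->
  (forall y, 0 < y -> - y <= F y) -> 0 < F b.
Proof.
  intros Hb Hd HG Hlow.
  enough (- F b < 0) by lra.
  apply (neg_of_derive_neg_near0 (fun x => - F x) (fun x => - G x)); auto.
  - intros y Hy; apply (is_derive_opp F); auto.
  - intros y Hy; enough (0 < G y) by lra; auto.
  - intros y Hy; specialize (Hlow y Hy); lra.
Qed.

Lemma sinh_gt_id x : 0 < x -> x < sinh x.
Proof.
  intros Hx; enough (0 < sinh x - x) by lra; revert x Hx.
  apply (pos_of_derive_pos _ (fun x => cosh x - 1)).
  - rewrite sinh_0; ring.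
  - intros y _; auto_derive; auto; ring.
  - intros y Hy; assert (H := cosh_gt1 y Hy); lra.
Qed.

Lemma sinh_ge_id x : 0 <= x -> x <= sinh x.
Proof. intros [Hx | <-]; [left; now apply sinh_gt_id | rewrite sinh_0; lra]. Qed.

Lemma cosh_mul_sinh_gt_id x : 0 < x -> x < cosh x * sinh x.
Proof.
  intros Hx; enough (0 < cosh x * sinh x - x) by lra; revert x Hx.
  apply (pos_of_derive_pos _ (fun x => 2 * sinh x * sinh x)).
  - rewrite sinh_0; ring.
  - intros y _; auto_derive; auto; assert (H := cosh_sqr y); lra.
  - intros y Hy; assert (H := sinh_pos y Hy); nra.
Qed.

Lemma cosh_ge_taylor2 x : 0 <= x -> 1 + x * x / 2 <= cosh x.
Proof.
  intros Hx; enough (0 <= cosh x - 1 - x * x / 2) by lra.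
  apply (nonneg_of_derive_nonneg (fun x => cosh x - 1 - x * x / 2)
    (fun x => sinh x - x) x); try lra.
  - rewrite cosh_0; field.
  - intros y _; auto_derive; auto; field.
  - intros y Hy; assert (H := sinh_ge_id y); lra.
Qed.

Lemma x_cosh_sub_sinh_ge x : 0 <= x -> x * x * x / 3 <= x * cosh x - sinh x.
Proof.
  intros Hx; enough (0 <= x * cosh x - sinh x - x * x * x / 3) by lra.
  apply (nonneg_of_derive_nonneg (fun x => x * cosh x - sinh x - x * x * x / 3)
    (fun x => x * sinh x - x * x) x); try lra.
  - rewrite sinh_0; field.
  - intros y _; auto_derive; auto; field.
  - intros y Hy; assert (H := sinh_ge_id y ltac:(lra)); nra.
Qed.

Lemma sinh_lt_x_cosh x : 0 < x -> sinh x < x * cosh x.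
Proof.
  intros Hx; assert (H := x_cosh_sub_sinh_ge x ltac:(lra)).
  assert (0 < x * x * x) by (repeat apply Rmult_lt_0_compat; lra); lra.
Qed.

Lemma triple_cosh_sinh_le x : 0 <= x ->
  3 * cosh x * sinh x + 4 * x * x * x * x * x / 15 <= x * (2 * cosh x * cosh x + 1).
Proof.
  intros Hx.
  enough (0 <= x * (2 * cosh x * cosh x + 1) - 3 * cosh x * sinh x
    - 4 * x * x * x * x * x / 15) by lra.
  apply (nonneg_of_derive_nonneg
    (fun x => x * (2 * cosh x * cosh x + 1) - 3 * cosh x * sinh x - 4 * x * x * x * x * x / 15)
    (fun x => 4 * sinh x * (x * cosh x - sinh x) - 4 * x * x * x * x / 3) x); try lra.
  - rewrite sinh_0, cosh_0; field.
  - intros y _; auto_derive; auto; assert (H := cosh_sqr y); nra.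
  - intros y Hy; assert (H := sinh_ge_id y ltac:(lra)).
    assert (H2 := x_cosh_sub_sinh_ge y ltac:(lra)).
    assert (0 <= y * y * y) by (apply Rmult_le_pos; nra); nra.
Qed.

Lemma triple_x_cosh_le x : 0 <= x -> 3 * x * cosh x <= sinh x * (sinh x * sinh x + 3).
Proof.
  intros Hx; enough (0 <= sinh x * (sinh x * sinh x + 3) - 3 * x * cosh x) by lra.
  apply (nonneg_of_derive_nonneg (fun x => sinh x * (sinh x * sinh x + 3) - 3 * x * cosh x)
    (fun x => 3 * sinh x * (sinh x * cosh x - x)) x); try lra.
  - rewrite sinh_0; field.
  - intros y _; auto_derive; auto; field.
  - intros y Hy; assert (H := sinh_pos y ltac:(lra)).
    assert (H2 := cosh_mul_sinh_gt_id y ltac:(lra)); nra.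
Qed.

Lemma triple_x_sinh_le x : 0 <= x -> 3 * (x * sinh x) <= (cosh x - 1) * (cosh x + 5).
Proof.
  intros Hx; rewrite (cosh_double x), (sinh_double x).
  assert (H := triple_x_cosh_le (x / 2) ltac:(lra)).
  assert (H1 := sinh_ge0 (x / 2) ltac:(lra)).
  replace x with (2 * (x / 2)) at 1 by field.
  set (z := x / 2) in *; set (a := sinh z) in *; set (b := cosh z) in *; nra.
Qed.

Lemma cosh_le_2 x : 0 <= x <= 1 -> cosh x <= 2.
Proof.
  intros Hx; unfold cosh.
  assert (exp x <= exp 1).
  { destruct (Req_dec x 1) as [-> | Hx1]; [lra | left; apply exp_increasing; lra]. }
  assert (exp (- x) <= 1).
  { rewrite <- exp_0; destruct (Req_dec x 0) as [-> | Hx0];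
      [rewrite Ropp_0; lra | left; apply exp_increasing; lra]. }
  assert (H3 := exp_le_3); lra.
Qed.

Lemma sinh_le_2x x : 0 <= x <= 1 -> sinh x <= 2 * x.
Proof.
  intros Hx; enough (0 <= 2 * x - sinh x) by lra.
  apply (nonneg_of_derive_nonneg (fun x => 2 * x - sinh x) (fun x => 2 - cosh x) 1); try lra.
  - rewrite sinh_0; field.
  - intros y _; auto_derive; auto; field.
  - intros y Hy; assert (H := cosh_le_2 y ltac:(lra)); lra.
Qed.

Lemma cosh_le_1_add_sqr x : 0 <= x <= 1 -> cosh x <= 1 + x * x.
Proof.
  intros Hx; enough (0 <= 1 + x * x - cosh x) by lra.
  apply (nonneg_of_derive_nonneg (fun x => 1 + x * x - cosh x)
    (fun x => 2 * x - sinh x) 1); try lra.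
  - rewrite cosh_0; field.
  - intros y _; auto_derive; auto; field.
  - intros y Hy; assert (H := sinh_le_2x y ltac:(lra)); lra.
Qed.

Lemma sinh_le_taylor3 x : 0 <= x <= 1 -> sinh x <= x + x * x * x / 3.
Proof.
  intros Hx; enough (0 <= x + x * x * x / 3 - sinh x) by lra.
  apply (nonneg_of_derive_nonneg (fun x => x + x * x * x / 3 - sinh x)
    (fun x => 1 + x * x - cosh x) 1); try lra.
  - rewrite sinh_0; field.
  - intros y _; auto_derive; auto; field.
  - intros y Hy; assert (H := cosh_le_1_add_sqr y ltac:(lra)); lra.
Qed.

Lemma cosh_le_taylor4 x : 0 <= x <= 1 -> cosh x <= 1 + x * x / 2 + x * x * x * x / 12.
Proof.
  intros Hx; enough (0 <= 1 + x * x / 2 + x * x * x * x / 12 - cosh x) by lra.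
  apply (nonneg_of_derive_nonneg (fun x => 1 + x * x / 2 + x * x * x * x / 12 - cosh x)
    (fun x => x + x * x * x / 3 - sinh x) 1); try lra.
  - rewrite cosh_0; field.
  - intros y _; auto_derive; auto; field.
  - intros y Hy; assert (H := sinh_le_taylor3 y ltac:(lra)); lra.
Qed.

Lemma cosh_mul_sinh_sub_le x : 0 <= x <= 1 ->
  cosh x * sinh x - x <= 2 * x * x * x / 3 + 14 * x * x * x * x * x / 45.
Proof.
  intros Hx.
  enough (0 <= 2 * x * x * x / 3 + 14 * x * x * x * x * x / 45 - (cosh x * sinh x - x)) by lra.
  apply (nonneg_of_derive_nonneg
    (fun x => 2 * x * x * x / 3 + 14 * x * x * x * x * x / 45 - (cosh x * sinh x - x))
    (fun x => 2 * x * x + 14 * x * x * x * x / 9 - 2 * sinh x * sinh x) 1); try lra.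
  - rewrite sinh_0; field.
  - intros y _; auto_derive; auto; assert (H := cosh_sqr y); nra.
  - intros y Hy; assert (H := sinh_le_taylor3 y ltac:(lra)).
    assert (H1 := sinh_ge0 y ltac:(lra)).
    assert (sinh y * sinh y <= (y + y * y * y / 3) * (y + y * y * y / 3)) by nra.
    assert (y * y <= 1) by nra; assert (0 <= y * y * y * y) by nra; nra.
Qed.

Lemma poly_ineq_small t : 0 < t <= 8 ->
  (1 + t) * (5 + 17 * t + 2 * t * t) ^ 5 < (5 + 18 * t + 9 * t * t) ^ 5.
Proof.
  intros Ht.
  assert (E : (5 + 18 * t + 9 * t * t) ^ 5 - (1 + t) * (5 + 17 * t + 2 * t * t) ^ 5 =
    t * t * (12500 + t * (182250 + t * (1072875 + t * (3251886 + t * (5378703 + t * (4815390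
      + t * (2292345 + t * (565610 + t * (57657 - 32 * t)))))))))) by ring.
  assert (0 < 12500 + t * (182250 + t * (1072875 + t * (3251886 + t * (5378703 + t * (4815390
      + t * (2292345 + t * (565610 + t * (57657 - 32 * t))))))))).
  { apply Rplus_lt_le_0_compat; [lra | apply Rmult_le_pos; [lra |]].
    repeat (apply Rplus_le_le_0_compat; [lra | apply Rmult_le_pos; [lra |]]); lra. }
  assert (0 < t * t) by nra; nra.
Qed.

Lemma poly_ineq_large x : 3 / 2 <= x -> (5 + 6 * x) ^ 5 < 32768 * (1 + x * x / 2) ^ 4.
Proof.
  intros Hx; set (y := x - 3 / 2); replace x with (3 / 2 + y) by (unfold y; ring).
  assert (E : 32768 * (1 + (3 / 2 + y) * (3 / 2 + y) / 2) ^ 4 - (5 + 6 * (3 / 2 + y)) ^ 5 =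
    130344 + y * (734112 + y * (1638592 + y * (1848384 + y * (1237152 + y * (526752
      + y * (145408 + y * (24576 + y * 2048)))))))) by field.
  assert (0 <= y * (734112 + y * (1638592 + y * (1848384 + y * (1237152 + y * (526752
      + y * (145408 + y * (24576 + y * 2048)))))))).
  { repeat (apply Rmult_le_pos; [unfold y; lra |]; apply Rplus_le_le_0_compat; [lra |]).
    unfold y; nra. }
  lra.
Qed.

Lemma fifth_power_ineq_small x : 0 < x <= 3 / 2 ->
  cosh x * (5 * cosh x + 6 * (x * sinh x)) ^ 5 < (9 * cosh x * cosh x - 4) ^ 5.
Proof.
  intros Hx; set (t := cosh x - 1).
  assert (Ht0 : 0 < t) by (assert (H := cosh_gt1 x ltac:(lra)); unfold t; lra).
  assert (Ht8 : t <= 8).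
  { assert (H := cosh_le_exp x ltac:(lra)).
    assert (exp x < exp 2) by (apply exp_increasing; lra).
    assert (exp 2 <= 9).
    { replace 2 with (1 + 1) by ring; rewrite exp_plus.
      assert (H3 := exp_le_3); assert (H1 := exp_pos 1); nra. }
    unfold t; lra. }
  assert (Hb := triple_x_sinh_le x ltac:(lra)).
  assert (Hs0 : 0 <= x * sinh x) by (assert (H := sinh_pos x ltac:(lra)); nra).
  assert (Ec : cosh x = 1 + t) by (unfold t; ring); rewrite Ec in Hb |- *.
  replace (9 * (1 + t) * (1 + t) - 4) with (5 + 18 * t + 9 * t * t) by ring.
  assert ((5 * (1 + t) + 6 * (x * sinh x)) ^ 5 <= (5 + 17 * t + 2 * t * t) ^ 5)
    by (apply pow_incr; nra).
  eapply Rle_lt_trans; [| exact (poly_ineq_small t ltac:(lra))].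
  apply Rmult_le_compat_l; lra.
Qed.

Lemma fifth_power_ineq_large x : 3 / 2 <= x ->
  cosh x * (5 * cosh x + 6 * (x * sinh x)) ^ 5 < (9 * cosh x * cosh x - 4) ^ 5.
Proof.
  intros Hx.
  assert (H2 := cosh_ge_taylor2 x ltac:(lra)); assert (Hs := sinh_lt_cosh x).
  assert (Hs0 := sinh_pos x ltac:(lra)).
  set (c := cosh x) in *.
  assert (Hc2 : 2 <= c) by nra.
  assert (H5 : (5 * c + 6 * (x * sinh x)) ^ 5 <= (c * (5 + 6 * x)) ^ 5) by (apply pow_incr; nra).
  assert (H8 : (8 * c * c) ^ 5 <= (9 * c * c - 4) ^ 5) by (apply pow_incr; nra).
  assert (H4 : (1 + x * x / 2) ^ 4 <= c ^ 4) by (apply pow_incr; nra).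
  assert (Hc6 : 0 < c ^ 6) by (apply pow_lt; lra).
  assert (HP := poly_ineq_large x Hx).
  assert (c * (c * (5 + 6 * x)) ^ 5 < (8 * c * c) ^ 5).
  { replace (c * (c * (5 + 6 * x)) ^ 5) with (c ^ 6 * (5 + 6 * x) ^ 5) by ring.
    replace ((8 * c * c) ^ 5) with (c ^ 6 * (32768 * c ^ 4)) by ring.
    apply Rmult_lt_compat_l; nra. }
  assert (c * (5 * c + 6 * (x * sinh x)) ^ 5 <= c * (c * (5 + 6 * x)) ^ 5)
    by (apply Rmult_le_compat_l; lra).
  lra.
Qed.

Lemma Rpower_pos a b : 0 < Rpower a b.
Proof. apply exp_pos. Qed.

Lemma cosh_root5_ge1 x : 1 <= Rpower (cosh x) (1 / 5).
Proof.
  assert (H := Rle_Rpower (cosh x) 0 (1 / 5) (cosh_ge1 x) ltac:(lra)).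
  now rewrite Rpower_O in H by apply cosh_pos.
Qed.

Lemma cosh_root5_pow5 x : Rpower (cosh x) (1 / 5) ^ 5 = cosh x.
Proof.
  rewrite <- Rpower_pow by apply Rpower_pos.
  rewrite Rpower_mult; replace (1 / 5 * INR 5) with 1 by (simpl; field).
  apply Rpower_1, cosh_pos.
Qed.

Lemma cosh_root5_ineq x : 0 < x ->
  Rpower (cosh x) (1 / 5) * (5 * cosh x + 6 * (x * sinh x)) < 9 * cosh x * cosh x - 4.
Proof.
  intros Hx.
  assert (H5 : cosh x * (5 * cosh x + 6 * (x * sinh x)) ^ 5 < (9 * cosh x * cosh x - 4) ^ 5).
  { destruct (Rle_dec x (3 / 2)).
    - apply fifth_power_ineq_small; lra.
    - apply fifth_power_ineq_large; lra. }
  rewrite <- (cosh_root5_pow5 x) in H5 at 1; rewrite <- Rpow_mult_distr in H5.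
  assert (Hc := cosh_gt1 x Hx); assert (Hs := sinh_pos x Hx).
  assert (He := cosh_root5_ge1 x).
  destruct (Rlt_le_dec (Rpower (cosh x) (1 / 5) * (5 * cosh x + 6 * (x * sinh x)))
              (9 * cosh x * cosh x - 4)) as [Hlt | Hge]; auto.
  assert (H9 : 0 <= 9 * cosh x * cosh x - 4) by nra.
  assert (H := pow_incr _ _ 5 (conj H9 Hge)); lra.
Qed.

Lemma six_x_cosh_lt x : 0 < x ->
  6 * x * cosh x < 5 * sinh x * cosh x / Rpower (cosh x) (1 / 5) + sinh x.
Proof.
  intros Hx.
  enough (0 < 5 * sinh x * cosh x / Rpower (cosh x) (1 / 5) + sinh x - 6 * x * cosh x) by lra.
  revert x Hx; apply (pos_of_derive_pos _ (fun x => (5 * cosh x * cosh x + 4 * sinh x * sinh x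
    - Rpower (cosh x) (1 / 5) * (5 * cosh x + 6 * (x * sinh x))) / Rpower (cosh x) (1 / 5))).
  - rewrite sinh_0; field; apply Rgt_not_eq, Rpower_pos.
  - intros y _; unfold Rpower; assert (Hc := cosh_pos y); auto_derive.
    + repeat split; auto; apply Rgt_not_eq, exp_pos.
    + assert (He := exp_pos (1 / 5 * ln (cosh y))); field; lra.
  - intros y Hy; assert (H := cosh_root5_ineq y Hy); assert (Hc := cosh_sqr y).
    apply Rdiv_lt_0_compat; [lra | apply Rpower_pos].
Qed.

Lemma root5_mul_x_cosh_sub_sinh_lt x : 0 < x ->
  2 * Rpower (cosh x) (1 / 5) * (x * cosh x - sinh x) < cosh x * sinh x - x.
Proof.
  intros Hx.
  enough (0 < cosh x * sinh x - x - 2 * Rpower (cosh x) (1 / 5) * (x * cosh x - sinh x)) by lra.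
  revert x Hx; apply (pos_of_derive_pos _ (fun x =>
    2 * sinh x * Rpower (cosh x) (1 / 5) / (5 * cosh x)
    * (5 * sinh x * cosh x / Rpower (cosh x) (1 / 5) + sinh x - 6 * x * cosh x))).
  - rewrite sinh_0; field.
  - intros y _; unfold Rpower; assert (Hc := cosh_pos y).
    assert (He := exp_pos (1 / 5 * ln (cosh y))); assert (Hch := cosh_sqr y).
    auto_derive; [auto |].
    rewrite !Rmult_1_l, Hch; field; lra.
  - intros y Hy; assert (H := six_x_cosh_lt y Hy).
    assert (Hc := cosh_pos y); assert (Hs := sinh_pos y Hy).
    assert (He := Rpower_pos (cosh y) (1 / 5)).
    apply Rmult_lt_0_compat; [apply Rdiv_lt_0_compat |]; nra.
Qed.

Lemma Rpower_1_l y : Rpower 1 y = 1.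
Proof. unfold Rpower; rewrite ln_1, Rmult_0_r; apply exp_0. Qed.

Lemma wpmean_pos r a b w : 0 < wpmean r a b w.
Proof.
  unfold wpmean; destruct (Req_EM_T r 0);
    [apply Rmult_lt_0_compat |]; apply Rpower_pos.
Qed.

Lemma ln_wpmean_1 r b w : ln (wpmean r 1 b w) =
  if Req_EM_T r 0 then (1 - w) * ln b else ln (w + (1 - w) * Rpower b r) / r.
Proof.
  unfold wpmean; destruct (Req_EM_T r 0).
  - rewrite Rpower_1_l, Rmult_1_l; apply ln_Rpower.
  - rewrite Rpower_1_l, Rmult_1_r, ln_Rpower; unfold Rdiv; ring.
Qed.

Lemma ln_wpmean_1_bounds r b w : 1 <= b -> 0 < w < 1 ->
  0 <= ln (wpmean r 1 b w) <= ln b.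
Proof.
  intros Hb Hw; rewrite ln_wpmean_1.
  assert (Hlb : 0 <= ln b) by (rewrite <- ln_1; apply ln_le; lra).
  destruct (Req_EM_T r 0) as [_ | Hr]; [nra |].
  set (v := Rpower b r); assert (Hv : 0 < v) by apply Rpower_pos.
  assert (Hlv : ln v = r * ln b) by apply ln_Rpower.
  assert (Hrr : r * / r = 1) by (field; auto).
  unfold Rdiv; destruct (Rlt_dec 0 r) as [Hr0 | Hr0].
  - assert (Hv1 : 1 <= v).
    { assert (H := Rle_Rpower b 0 r Hb ltac:(lra)); now rewrite Rpower_O in H by lra. }
    assert (0 <= ln (w + (1 - w) * v)) by (rewrite <- ln_1; apply ln_le; nra).
    assert (ln (w + (1 - w) * v) <= ln v) by (apply ln_le; nra).
    assert (0 < / r) by (apply Rinv_0_lt_compat; lra); nra.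
  - assert (Hv1 : v <= 1).
    { assert (H := Rle_Rpower b r 0 Hb ltac:(lra)); now rewrite Rpower_O in H by lra. }
    assert (ln (w + (1 - w) * v) <= 0) by (rewrite <- ln_1; apply ln_le; nra).
    assert (ln v <= ln (w + (1 - w) * v)) by (apply ln_le; nra).
    assert (/ r < 0) by (apply Rinv_lt_0_compat; lra); nra.
Qed.

Definition mean_gap r x := ln (wpmean r 1 (cosh x) (2 / 3)) - ln (sinh x / x).

Definition mean_gap_num v x := v * (cosh x * sinh x - x) - 2 * cosh x * (x * cosh x - sinh x).

Lemma mean_gap_num_alt v x : mean_gap_num v x
  = v * (sinh x * sinh x * x) - cosh x * (2 + v) * (x * cosh x - sinh x).
Proof.
  unfold mean_gap_num.
  replace (sinh x * sinh x) with (cosh x * cosh x - 1) by (rewrite cosh_sqr; ring); ring.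
Qed.

Lemma is_derive_mean_gap r x : 0 < x ->
  is_derive (mean_gap r) x (mean_gap_num (Rpower (cosh x) r) x
    / (x * sinh x * cosh x * (2 + Rpower (cosh x) r))).
Proof.
  intros Hx; assert (Hc := cosh_pos x); assert (Hs := sinh_pos x Hx).
  assert (Hsx : 0 < sinh x * / x) by (apply Rmult_lt_0_compat; [| apply Rinv_0_lt_compat]; lra).
  apply (is_derive_ext (fun y =>
    (if Req_EM_T r 0 then (1 - 2 / 3) * ln (cosh y)
     else ln (2 / 3 + (1 - 2 / 3) * Rpower (cosh y) r) / r) - ln (sinh y / y))).
  { intros y; unfold mean_gap; now rewrite ln_wpmean_1. }
  rewrite mean_gap_num_alt; destruct (Req_EM_T r 0) as [-> | Hr].
  - rewrite Rpower_O by lra; auto_derive.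
    + repeat split; auto; lra.
    + field; repeat split; lra.
  - assert (Hv := Rpower_pos (cosh x) r); unfold Rpower in *; auto_derive.
    + repeat split; auto; lra.
    + field; repeat split; lra.
Qed.

Lemma ln_sinhc_bounds x : 0 < x -> 0 <= ln (sinh x / x) <= ln (cosh x).
Proof.
  intros Hx; assert (Hs := sinh_gt_id x Hx); assert (Hc := sinh_lt_x_cosh x Hx).
  assert (Hi : x * / x = 1) by (field; lra).
  assert (Hi0 : 0 < / x) by (apply Rinv_0_lt_compat; lra).
  unfold Rdiv; split; rewrite <- ?ln_1; apply ln_le; nra.
Qed.

Lemma mean_gap_bounds r x : 0 < x -> - x <= mean_gap r x <= x.
Proof.
  intros Hx; unfold mean_gap.
  assert (H1 := ln_wpmean_1_bounds r (cosh x) (2 / 3) (cosh_ge1 x) ltac:(lra)).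
  assert (H2 := ln_sinhc_bounds x Hx); assert (H3 := ln_cosh_le x ltac:(lra)); lra.
Qed.

Lemma mean_gap_denom_pos r x : 0 < x -> 0 < x * sinh x * cosh x * (2 + Rpower (cosh x) r).
Proof.
  intros Hx; assert (Hs := sinh_pos x Hx); assert (Hc := cosh_pos x).
  assert (Hv := Rpower_pos (cosh x) r).
  apply Rmult_lt_0_compat; [apply Rmult_lt_0_compat; [apply Rmult_lt_0_compat |] |]; lra.
Qed.

Lemma mean_gap_neg r b : 0 < b ->
  (forall x, 0 < x < b -> mean_gap_num (Rpower (cosh x) r) x < 0) -> mean_gap r b < 0.
Proof.
  intros Hb Hnum.
  apply (neg_of_derive_neg_near0 _ (fun x => mean_gap_num (Rpower (cosh x) r) x
    / (x * sinh x * cosh x * (2 + Rpower (cosh x) r))) b Hb).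
  - intros x Hx; apply is_derive_mean_gap; lra.
  - intros x Hx; apply Rdiv_neg_pos; [now apply Hnum | apply mean_gap_denom_pos; lra].
  - intros y Hy; now apply mean_gap_bounds.
Qed.

Lemma mean_gap_pos r b : 0 < b ->
  (forall x, 0 < x -> 0 < mean_gap_num (Rpower (cosh x) r) x) -> 0 < mean_gap r b.
Proof.
  intros Hb Hnum.
  apply (pos_of_derive_pos_near0 _ (fun x => mean_gap_num (Rpower (cosh x) r) x
    / (x * sinh x * cosh x * (2 + Rpower (cosh x) r))) b Hb).
  - intros x Hx; apply is_derive_mean_gap; lra.
  - intros x Hx; apply Rdiv_lt_0_compat; [apply Hnum | apply mean_gap_denom_pos]; lra.
  - intros y Hy; now apply mean_gap_bounds.
Qed.

Lemma wpmean_lt_sinhc r x : 0 < x -> mean_gap r x < 0 ->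
  wpmean r 1 (cosh x) (2 / 3) < sinh x / x.
Proof.
  intros Hx H; unfold mean_gap in H.
  apply ln_lt_inv; [apply wpmean_pos | apply Rdiv_lt_0_compat; [apply sinh_pos |] | ]; lra.
Qed.

Lemma sinhc_lt_wpmean r x : 0 < x -> 0 < mean_gap r x ->
  sinh x / x < wpmean r 1 (cosh x) (2 / 3).
Proof.
  intros Hx H; unfold mean_gap in H.
  apply ln_lt_inv; [apply Rdiv_lt_0_compat; [apply sinh_pos |] | apply wpmean_pos | ]; lra.
Qed.

Lemma mean_gap_num_le v v' x : 0 < x -> v <= v' -> mean_gap_num v x <= mean_gap_num v' x.
Proof.
  intros Hx Hv; assert (H := cosh_mul_sinh_gt_id x Hx); unfold mean_gap_num; nra.
Qed.

Lemma mean_gap_num_1_le x : 0 <= x -> mean_gap_num 1 x + 4 * x * x * x * x * x / 15 <= 0.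
Proof. intros Hx; assert (H := triple_cosh_sinh_le x Hx); unfold mean_gap_num; lra. Qed.

Lemma mean_gap_num_pow45_pos x : 0 < x -> 0 < mean_gap_num (Rpower (cosh x) (4 / 5)) x.
Proof.
  intros Hx; set (e := Rpower (cosh x) (1 / 5)).
  assert (He : 0 < e) by apply Rpower_pos; assert (Hc := cosh_pos x).
  assert (E : Rpower (cosh x) (4 / 5) = cosh x / e).
  { unfold e; apply (Rmult_eq_reg_r (Rpower (cosh x) (1 / 5))); [| apply Rgt_not_eq, Rpower_pos].
    rewrite <- Rpower_plus; replace (4 / 5 + 1 / 5) with 1 by field.
    rewrite Rpower_1 by lra; field; apply Rgt_not_eq, Rpower_pos. }
  assert (H := root5_mul_x_cosh_sub_sinh_lt x Hx); fold e in H.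
  unfold mean_gap_num; rewrite E.
  replace (cosh x / e * (cosh x * sinh x - x) - 2 * cosh x * (x * cosh x - sinh x))
    with (cosh x / e * (cosh x * sinh x - x - 2 * e * (x * cosh x - sinh x))) by (field; lra).
  apply Rmult_lt_0_compat; [apply Rdiv_lt_0_compat |]; lra.
Qed.

Lemma Rpower_bernoulli_le r u : 0 < r < 1 -> 1 <= u -> Rpower u r <= 1 + r * (u - 1).
Proof.
  intros Hr Hu; enough (0 <= 1 + r * (u - 1) - Rpower u r) by lra.
  replace 0 with (1 + r * (1 - 1) - Rpower 1 r) by (rewrite Rpower_1_l; ring).
  apply (derive_nonneg_le (fun u => 1 + r * (u - 1) - Rpower u r)
    (fun u => r - r * Rpower u r / u)); auto.
  - intros y Hy; unfold Rpower; auto_derive; [lra | field; lra].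
  - intros y Hy; assert (H := Rle_Rpower y r 1 ltac:(lra) ltac:(lra)).
    rewrite Rpower_1 in H by lra.
    assert (Rpower y r / y <= 1).
    { unfold Rdiv; assert (y * / y = 1) by (field; lra).
      assert (0 < / y) by (apply Rinv_0_lt_compat; lra); nra. }
    nra.
Qed.

Lemma mean_gap_num_lin_neg r x : 0 < r -> 0 < x <= 4 / 5 - r ->
  mean_gap_num (1 + r * (cosh x - 1)) x < 0.
Proof.
  intros Hr Hx.
  assert (H1 := mean_gap_num_1_le x ltac:(lra)).
  assert (Hc := cosh_le_taylor4 x ltac:(lra)); assert (Hc1 := cosh_ge1 x).
  assert (HA := cosh_mul_sinh_sub_le x ltac:(lra)).
  assert (HA0 := cosh_mul_sinh_gt_id x ltac:(lra)).
  set (p := x * x * x * x * x).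
  assert (Hp : 0 < p) by (unfold p; repeat apply Rmult_lt_0_compat; lra).
  assert (Hprod : (cosh x - 1) * (cosh x * sinh x - x) <= p * (1 / 3 + x * x / 4)).
  { apply Rle_trans with
      ((x * x / 2 + x * x * x * x / 12) * (2 * x * x * x / 3 + 14 * x * x * x * x * x / 45)).
    - apply Rmult_le_compat; lra.
    - replace ((x * x / 2 + x * x * x * x / 12) * (2 * x * x * x / 3 + 14 * x * x * x * x * x / 45))
        with (p * (1 / 3 + 19 / 90 * (x * x) + 7 / 270 * (x * x * (x * x)))) by (unfold p; field).
      apply Rmult_le_compat_l; [lra |].
      assert (x * x <= 1) by nra; assert (0 <= x * x) by nra; nra. }
  assert (Hr' : r * (1 / 3 + x * x / 4) < 4 / 15) by nra.
  replace (mean_gap_num (1 + r * (cosh x - 1)) x)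
    with (mean_gap_num 1 x + r * ((cosh x - 1) * (cosh x * sinh x - x)))
    by (unfold mean_gap_num; ring).
  assert (r * ((cosh x - 1) * (cosh x * sinh x - x)) <= r * (p * (1 / 3 + x * x / 4)))
    by (apply Rmult_le_compat_l; lra).
  unfold p in *; nra.
Qed.

Lemma wpmean_lt_sinhc_of_nonpos r x : r <= 0 -> 0 < x ->
  wpmean r 1 (cosh x) (2 / 3) < sinh x / x.
Proof.
  intros Hr Hx; apply wpmean_lt_sinhc; [lra |]; apply mean_gap_neg; [lra |].
  intros y Hy.
  assert (Hv : Rpower (cosh y) r <= 1).
  { assert (H := Rle_Rpower (cosh y) r 0 (cosh_ge1 y) Hr).
    now rewrite Rpower_O in H by apply cosh_pos. }
  assert (H := mean_gap_num_le _ _ y ltac:(lra) Hv).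
  assert (H1 := mean_gap_num_1_le y ltac:(lra)).
  assert (0 < y * y * y * y * y) by (repeat apply Rmult_lt_0_compat; lra); lra.
Qed.

Lemma sinhc_lt_wpmean_of_ge r x : 4 / 5 <= r -> 0 < x ->
  sinh x / x < wpmean r 1 (cosh x) (2 / 3).
Proof.
  intros Hr Hx; apply sinhc_lt_wpmean; [lra |]; apply mean_gap_pos; [lra |].
  intros y Hy; eapply Rlt_le_trans; [exact (mean_gap_num_pow45_pos y Hy) |].
  apply mean_gap_num_le; auto; apply Rle_Rpower; [apply cosh_ge1 | lra].
Qed.

(* The mean is at least [3^(-1/r) cosh x], which at [x = 3^(1/r)] beats [sinh x / x]. *)
Lemma sinhc_lt_wpmean_somewhere r : 0 < r ->
  exists x, 0 < x /\ sinh x / x < wpmean r 1 (cosh x) (2 / 3).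
Proof.
  intros Hr; set (x := Rpower 3 (1 / r)).
  assert (Hx : 0 < x) by apply Rpower_pos.
  exists x; split; auto; apply sinhc_lt_wpmean; auto; unfold mean_gap.
  assert (Hc := cosh_pos x); assert (Hs := sinh_pos x Hx); assert (Hsc := sinh_lt_cosh x).
  assert (Hv := Rpower_pos (cosh x) r).
  assert (Hlx : ln x = ln 3 / r) by (unfold x; rewrite ln_Rpower; field; lra).
  assert (Hlv : ln (Rpower (cosh x) r) = r * ln (cosh x)) by apply ln_Rpower.
  assert (H3 : ln (Rpower (cosh x) r) - ln 3 < ln (2 / 3 + (1 - 2 / 3) * Rpower (cosh x) r)).
  { rewrite <- ln_div by lra; apply ln_increasing; [apply Rdiv_lt_0_compat |]; lra. }
  assert (Hls : ln (sinh x) < ln (cosh x)) by (apply ln_increasing; lra).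
  rewrite ln_wpmean_1, ln_div by lra; destruct (Req_EM_T r 0) as [| _]; [lra |].
  replace (ln (2 / 3 + (1 - 2 / 3) * Rpower (cosh x) r) / r - (ln (sinh x) - ln x))
    with ((ln (2 / 3 + (1 - 2 / 3) * Rpower (cosh x) r) - (r * ln (sinh x) - ln 3)) / r)
    by (rewrite Hlx; field; lra).
  apply Rdiv_lt_0_compat; nra.
Qed.

Lemma wpmean_lt_sinhc_somewhere r : r < 4 / 5 ->
  exists x, 0 < x /\ wpmean r 1 (cosh x) (2 / 3) < sinh x / x.
Proof.
  intros Hr; destruct (Rle_dec r 0) as [Hr0 | Hr0].
  - exists 1; split; [lra | apply wpmean_lt_sinhc_of_nonpos; lra].
  - exists (4 / 5 - r); split; [lra |].
    apply wpmean_lt_sinhc; [lra |]; apply mean_gap_neg; [lra |].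
    intros y Hy; eapply Rle_lt_trans; [| apply (mean_gap_num_lin_neg r y); lra].
    apply mean_gap_num_le; [lra |].
    apply Rpower_bernoulli_le; [lra | apply cosh_ge1].
Qed.

Theorem corollary4p4 (alpha beta : R) :
  (forall x : R, 0 < x ->
     wpmean alpha 1 (cosh x) (2/3) < sinh x / x /\
     sinh x / x < wpmean beta 1 (cosh x) (2/3))
  <-> (alpha <= 0 /\ beta >= 4/5).
Proof.
  split.
  - intros H; split.
    + destruct (Rle_dec alpha 0) as [Ha | Ha]; auto.
      destruct (sinhc_lt_wpmean_somewhere alpha ltac:(lra)) as [x [Hx Hlt]].
      destruct (H x Hx); lra.
    + destruct (Rge_dec beta (4 / 5)) as [Hb | Hb]; auto.
      destruct (wpmean_lt_sinhc_somewhere beta ltac:(lra)) as [x [Hx Hlt]].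
      destruct (H x Hx); lra.
  - intros [Ha Hb] x Hx; split.
    + now apply wpmean_lt_sinhc_of_nonpos.
    + apply sinhc_lt_wpmean_of_ge; lra.
Qed.
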